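(* Let $A=(A,a_0,a_1)$ be an inductive bipointed type, with $s:\mathsf{isind}(A)$. For a small fibered bipointed type $(E,e_0,e_1)$ over $A$ write $s(E,e_0,e_1)=(\mathsf{elim}(-,e_0,e_1),\mathsf{comp}_0(e_0,e_1),\mathsf{comp}_1(e_0,e_1))$, so that $\mathsf{comp}_k(e_0,e_1):\mathsf{Id}(\mathsf{elim}(a_k,e_0,e_1),e_k)$. Then for every small fibered bipointed type $(E,e_0,e_1)$ over $A$ and every bipointed section $(f,\bar f_0,\bar f_1)$ of it (i.e. $f:(\Pi x:A)E(x)$, $\bar f_k:\mathsf{Id}(fa_k,e_k)$), there exist (i) ($\eta$-rule) $\eta:(\Pi x:A)\,\mathsf{Id}(fx,\mathsf{elim}(x,e_0,e_1))$, and (ii) (coherence rule) for $k\in\{0,1\}$, paths $\bar\eta_k:\mathsf{Id}\big(\mathsf{comp}_k(e_0,e_1)\cdot\eta_{a_k},\ \bar f_k\big)$.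
   Context: We work in the intensional Martin-Löf type theory $\mathcal H$ ($\Sigma$, $\Pi$, identity types, a universe $\mathsf U$ à la Russell closed under these, judgemental $\eta$ for $\Pi$, function extensionality; no identity reflection, K or UIP). For paths $p:\mathsf{Id}(a,b)$, $q:\mathsf{Id}(b,c)$, $q\cdot p:\mathsf{Id}(a,c)$ is their composite. A bipointed type is a triple $(A,a_0,a_1)$ with $a_0,a_1:A$. A small fibered bipointed type over $A$ is $(E,e_0,e_1)$ with $E:A\to\mathsf U$, $e_0:E(a_0)$, $e_1:E(a_1)$; $\mathsf{FibBip}(A)$ is their type. A bipointed section of $(E,e_0,e_1)$ is $(f,\bar f_0,\bar f_1)$ with $f:(\Pi x:A)E(x)$ and $\bar f_k:\mathsf{Id}_{E(a_k)}(fa_k,e_k)$; $\mathsf{BipSec}(A,E)$ is their type. $\mathsf{isind}(A)=(\Pi E:\mathsf{FibBip}(A))\mathsf{BipSec}(A,E)$, and $A$ is inductive if this type is inhabited. *)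

(* Plain Rocq (no MathComp needed). Intensional MLTT identity types are
   modelled by a Type-valued inductive Id (no K/UIP available). *)
Set Universe Polymorphism.
Set Implicit Arguments.

Inductive Id {A : Type} (a : A) : A -> Type :=
| refl : Id a a.
Arguments refl {A} a.

(* q · p : Id a c for p : Id a b, q : Id b c *)
Definition concat {A : Type} {a b c : A} (q : Id b c) (p : Id a b) : Id a c :=
  match q in Id _ c' return Id a c' with
  | refl _ => p
  end.

Record FibBip (A : Type) (a0 a1 : A) : Type := mkFibBip {
  fam : A -> Type;
  pt0 : fam a0;
  pt1 : fam a1 }.

Record BipSec (A : Type) (a0 a1 : A) (E : FibBip a0 a1) : Type := mkBipSec {
  sec : forall x : A, fam E x;
  sec0 : Id (sec a0) (pt0 E);
  sec1 : Id (sec a1) (pt1 E) }.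

Definition isind (A : Type) (a0 a1 : A) : Type :=
  forall E : FibBip a0 a1, BipSec E.

(* Apply induction to the family x |-> Id (g x) (h x) of paths between two bipointed
   sections g, h, pointed at a_k by (h̄_k)^-1 · ḡ_k.  The section it yields is the
   homotopy eta, and transposing the inverse back gives the coherence paths. *)

Definition inv {X : Type} {a b : X} (p : Id a b) : Id b a :=
  match p in Id _ b' return Id b' a with refl _ => refl a end.

Definition ap {X Y : Type} (g : X -> Y) {a b : X} (p : Id a b) : Id (g a) (g b) :=
  match p in Id _ b' return Id (g a) (g b') with refl _ => refl (g a) end.

Lemma concat_concat_inv {X : Type} {a b c : X} (q : Id b c) (r : Id a c) :
  Id (concat q (concat (inv q) r)) r.
Proof. destruct q. exact (refl _). Defined.

Lemma concat_inv_transpose {X : Type} {a b c : X} (q : Id b c) (r : Id a c)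
  {t : Id a b} (e : Id t (concat (inv q) r)) : Id (concat q t) r.
Proof. exact (concat (concat_concat_inv q r) (ap (concat q) e)). Defined.

Section BipSecHomotopy.

Variables (A : Type) (a0 a1 : A) (E : FibBip a0 a1).

Definition bipsec_path_fam (g h : BipSec E) : FibBip a0 a1 :=
  @mkFibBip A a0 a1 (fun x => Id (sec g x) (sec h x))
    (concat (inv (sec0 h)) (sec0 g))
    (concat (inv (sec1 h)) (sec1 g)).

Lemma isind_bipsec_homotopy (s : isind a0 a1) (g h : BipSec E) :
  { eta : forall x : A, Id (sec g x) (sec h x) &
    (Id (concat (sec0 h) (eta a0)) (sec0 g) *
     Id (concat (sec1 h) (eta a1)) (sec1 g))%type }.
Proof.
  pose (t := s (bipsec_path_fam g h)).
  exists (sec t); split.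
  - exact (concat_inv_transpose _ _ (sec0 t)).
  - exact (concat_inv_transpose _ _ (sec1 t)).
Defined.

End BipSecHomotopy.

Theorem mainTheorem16 (A : Type) (a0 a1 : A) (s : isind a0 a1)
  (E : FibBip a0 a1) (f : BipSec E) :
  { eta : forall x : A, Id (sec f x) (sec (s E) x) &
    (Id (concat (sec0 (s E)) (eta a0)) (sec0 f) *
     Id (concat (sec1 (s E)) (eta a1)) (sec1 f))%type }.
Proof. exact (@isind_bipsec_homotopy A a0 a1 E s f (s E)). Defined.
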